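(* Let $I=\langle N,M,V\rangle$ be an ordered instance of chores, let $i\in N$, and let $k$ be the maximum number of bundles of cardinality one in any MMS partition of $i$. Then $i$ has an MMS partition in which each of the chores $1,2,\dots,\min(n-1,k)$ forms a bundle of cardinality one.
   Context: An instance of chores $I=\langle N,M,V\rangle$ has agents $N=\{1,\dots,n\}$, chores $M=\{1,\dots,m\}$ and additive valuations $v_i$ with $v_i(\emptyset)=0$, $v_i(S)=\sum_{g\in S}v_i(\{g\})$ and $v_{ij}:=v_i(\{j\})\le 0$. It is ordered if $v_{ij}\le v_{i(j+1)}$ for all $i$ and $1\le j<m$. An allocation ($n$-partition) is an ordered $n$-tuple of pairwise disjoint, possibly empty subsets of $M$ with union $M$. The maximin share of $i$ is $\mu_i=\max_A\min_j v_i(A_j)$ over all allocations; an MMS partition of $i$ is an allocation $A$ with $v_i(A_j)\ge\mu_i$ for all $j$. *)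

From mathcomp Require Import all_boot all_order all_algebra.
Set Implicit Arguments. Unset Strict Implicit. Unset Printing Implicit Defensive.
Import Order.TTheory GRing.Theory Num.Theory.
Local Open Scope ring_scope.

(* Agents are 'I_n (agent i+1 of the paper is i), chores are 'I_m
   (chore j+1 of the paper is j).  A valuation profile is v : 'I_n -> 'I_m -> R,
   v i j = v_{i(j+1)}; additivity is built in via bundle_val. *)

Section Chores.
Variables (R : realFieldType) (n m : nat).
Implicit Types (v : 'I_n -> 'I_m -> R) (A : 'I_n -> {set 'I_m}).

Definition bundle_val v (i : 'I_n) (S : {set 'I_m}) : R := \sum_(g in S) v i g.

Definition chores_instance v : Prop := forall i j, v i j <= 0.

Definition ordered_instance v : Prop :=
  forall i (j j' : 'I_m), nat_of_ord j' = (nat_of_ord j).+1 -> v i j <= v i j'.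

Definition is_allocation A : Prop :=
  (forall j k : 'I_n, j != k -> [disjoint A j & A k]) /\
  \bigcup_(j : 'I_n) A j = [set: 'I_m].

Definition is_maximin_share v (i : 'I_n) (mu : R) : Prop :=
  (exists A, is_allocation A /\ forall j, mu <= bundle_val v i (A j)) /\
  (forall A, is_allocation A -> exists j, bundle_val v i (A j) <= mu).

Definition is_MMS_partition v (i : 'I_n) A : Prop :=
  is_allocation A /\
  exists mu, is_maximin_share v i mu /\ forall j, mu <= bundle_val v i (A j).

Definition num_singletons A : nat := #|[set j : 'I_n | #|A j| == 1%N]|.

End Chores.

(* Every chore is worth at least mu_i to agent i: chores have non-positive
   value, so a bundle is worth at most any of its chores, and every bundle of an
   MMS partition is worth at least mu_i.  Hence if chores 0, ..., s-1 already
   form singleton bundles and s < k, then by pigeonhole some singleton bundle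
   {b} has b >= s, and exchanging chores s and b keeps an MMS partition: the
   bundle {b} becomes {s}, worth v_is >= mu_i, while the bundle that held s now
   holds b, which the ordering makes worth at least as much. *)

From mathcomp Require Import all_boot all_order all_algebra perm.
Set Implicit Arguments. Unset Strict Implicit. Unset Printing Implicit Defensive.
Import Order.TTheory GRing.Theory Num.Theory.
Local Open Scope ring_scope.

Section Allocations.
Variables (n m : nat).
Implicit Types (A : 'I_n -> {set 'I_m}) (s : {perm 'I_m}).

Definition relabel s A : 'I_n -> {set 'I_m} := fun l => s @: A l.

Definition initial_singletons A (t : nat) : Prop :=
  forall j : 'I_m, (j < t)%N -> exists l, A l = [set j].

Lemma relabel_allocation s A : is_allocation A -> is_allocation (relabel s A).
Proof.
move=> [disjA coverA]; split=> [j k jk|].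
  by rewrite imset_disjoint ?disjA //; apply: perm_inj.
rewrite -(big_morph _ (imsetU s) (imset0 s)) coverA.
by apply/setP=> x; rewrite inE; apply/imsetP; exists ((s^-1)%g x); rewrite ?permKV.
Qed.

Lemma card_relabel s A l : #|relabel s A l| = #|A l|.
Proof. by rewrite card_imset //; apply: perm_inj. Qed.

Lemma num_singletons_relabel s A : num_singletons (relabel s A) = num_singletons A.
Proof. by apply: eq_card => l; rewrite !inE card_relabel. Qed.

Lemma relabel_set1 s A l j : A l = [set j] -> relabel s A l = [set s j].
Proof. by rewrite /relabel => ->; rewrite imset_set1. Qed.

Lemma allocation_mem_eq A l l' x : is_allocation A ->
  x \in A l -> x \in A l' -> l = l'.
Proof.
move=> [disjA _] xl xl'; apply/eqP/negPn/negP => /disjA/disjointFr/(_ xl).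
by rewrite xl'.
Qed.

Lemma num_singletons_le A t : is_allocation A ->
  (forall l (b : 'I_m), A l = [set b] -> (b < t)%N) -> (num_singletons A <= t)%N.
Proof.
move=> allocA lt_t; set S := [set l | #|A l| == 1%N].
have singleS l : l \in S -> exists b, A l = [set b] by rewrite inE => /cards1P.
(* the chore of a singleton bundle, as a nat so that no default chore is needed *)
pose item l := (\sum_(x in A l) val x)%N.
have itemE l b : A l = [set b] -> item l = b by rewrite /item => ->; rewrite big_set1.
have item_inj : {in enum S &, injective item}.
  move=> l l'; rewrite !mem_enum => /singleS[b Al] /singleS[b' Al'].
  rewrite (itemE _ _ Al) (itemE _ _ Al') => /val_inj eq_bb'.
  by apply: (allocation_mem_eq (x := b) allocA); rewrite ?Al ?Al' ?eq_bb' set11.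
rewrite /num_singletons cardE -(size_map item) -(size_iota 0 t) uniq_leq_size //.
  by rewrite map_inj_in_uniq ?enum_uniq.
move=> _ /mapP[l + ->]; rewrite mem_enum => /singleS[b Al].
by rewrite mem_iota (itemE _ _ Al) (lt_t _ _ Al).
Qed.

Lemma exists_singleton_ge A t : is_allocation A -> (t < num_singletons A)%N ->
  exists l (b : 'I_m), A l = [set b] /\ (t <= b)%N.
Proof.
move=> allocA lt_t.
have [/existsP[l /existsP[b /andP[/eqP Al le_tb]]]|none] :=
  boolP [exists l, exists b : 'I_m, (A l == [set b]) && (t <= b)%N].
  by exists l, b.
suff : (num_singletons A <= t)%N by rewrite leqNgt lt_t.
apply: num_singletons_le => // l b Al; rewrite ltnNge; apply: contra none => le_tb.
by apply/existsP; exists l; apply/existsP; exists b; rewrite Al eqxx.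
Qed.

End Allocations.

Section OrderedChores.
Variables (R : realFieldType) (n m : nat) (v : 'I_n -> 'I_m -> R) (i : 'I_n).
Hypotheses (choresv : chores_instance v) (orderedv : ordered_instance v).
Implicit Types (A : 'I_n -> {set 'I_m}) (S : {set 'I_m}).

Lemma ordered_instance_mono (a b : 'I_m) : (a <= b)%N -> v i a <= v i b.
Proof.
(* [insubd a] extends [v i] to all of nat. *)
rewrite -[in v i a](valKd a a) -[in v i b](valKd a b).
apply: (homo_leq_in (D := [pred k | (k < m)%N]) (f := fun k => v i (insubd a k))
  (r := <=%R)); rewrite ?inE //.
- exact: le_trans.
- by move=> ? k _ km j /andP[_ jk]; rewrite inE (ltn_trans jk).
- by move=> k; rewrite !inE => km k1m; apply: orderedv; rewrite !val_insubd km k1m.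
Qed.

Lemma bundle_val_le_item S j : j \in S -> bundle_val v i S <= v i j.
Proof.
move=> jS; rewrite /bundle_val (bigD1 j) //= gerDl.
by apply: sumr_le0 => x _; apply: choresv.
Qed.

Lemma bundle_lower_bound_le_item A mu j : is_allocation A ->
  (forall l, mu <= bundle_val v i (A l)) -> mu <= v i j.
Proof.
move=> [_ coverA] mu_le.
have /bigcupP[l _ jAl] : j \in \bigcup_l A l by rewrite coverA inE.
exact: le_trans (mu_le l) (bundle_val_le_item jAl).
Qed.

Lemma bundle_val_relabel (s : {perm 'I_m}) A l :
  bundle_val v i (relabel s A l) = \sum_(x in A l) v i (s x).
Proof. by rewrite /bundle_val big_imset //; apply: in2W; apply: perm_inj. Qed.

Lemma MMS_partition_swap A p (a b : 'I_m) : is_MMS_partition v i A ->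
  A p = [set b] -> (a <= b)%N -> is_MMS_partition v i (relabel (tperm a b) A).
Proof.
move=> [allocA [mu [mmsmu mu_le]]] Ap le_ab.
split; first exact: relabel_allocation.
exists mu; split=> // l.
have [->|lp] := eqVneq l p.
  rewrite (relabel_set1 _ Ap) tpermR /bundle_val big_set1.
  exact: bundle_lower_bound_le_item allocA mu_le.
rewrite bundle_val_relabel; apply: le_trans (mu_le l) _; apply: ler_sum => x xAl.
have bAl : b \notin A l.
  apply: contra lp => bAl; apply/eqP/(allocation_mem_eq allocA bAl).
  by rewrite Ap set11.
case: tpermP => [->|xb|//]; first exact: ordered_instance_mono.
by move: xAl; rewrite xb (negbTE bAl).
Qed.

Lemma MMS_partition_extend_singletons A (a : 'I_m) : is_MMS_partition v i A ->
  (a < num_singletons A)%N -> initial_singletons A a ->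
  exists B, [/\ is_MMS_partition v i B, num_singletons B = num_singletons A
              & initial_singletons B a.+1].
Proof.
move=> mmsA lt_a initA.
have [p [b [Ap le_ab]]] := exists_singleton_ge mmsA.1 lt_a.
exists (relabel (tperm a b) A); split.
- exact: MMS_partition_swap Ap le_ab.
- exact: num_singletons_relabel.
move=> j; rewrite ltnS leq_eqVlt => /orP[/eqP/val_inj-> | lt_ja].
  by exists p; rewrite (relabel_set1 _ Ap) tpermR.
have [l Al] := initA j lt_ja.
exists l; rewrite (relabel_set1 _ Al) tpermD // -val_eqE gtn_eqF //.
exact: leq_trans lt_ja le_ab.
Qed.

Lemma MMS_partition_initial_singletons A t : is_MMS_partition v i A ->
  (t <= num_singletons A)%N ->
  exists2 B, is_MMS_partition v i B & initial_singletons B t.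
Proof.
move=> mmsA le_tA.
suff [B [mmsB _ initB]] : exists B, [/\ is_MMS_partition v i B,
    num_singletons B = num_singletons A & initial_singletons B t].
  by exists B.
elim: t le_tA => [_|t IH lt_tA]; first by exists A; split.
have [B [mmsB numB initB]] := IH (ltnW lt_tA).
have [lt_tm|le_mt] := ltnP t m; last first.
  by exists B; split=> // j lt_jt; apply/initB/(leq_trans (ltn_ord j)).
have lt_tB : (Ordinal lt_tm < num_singletons B)%N by rewrite numB.
have [B' [mmsB' numB' initB']] := MMS_partition_extend_singletons mmsB lt_tB initB.
by exists B'; split; rewrite ?numB'.
Qed.

End OrderedChores.

Theorem lemma18 (R : realFieldType) (n m : nat) (v : 'I_n -> 'I_m -> R)
    (i : 'I_n) (k : nat) :
  (0 < n)%N ->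
  chores_instance v -> ordered_instance v ->
  (exists A, is_MMS_partition v i A /\ num_singletons A = k) ->
  (forall A, is_MMS_partition v i A -> (num_singletons A <= k)%N) ->
  exists A, is_MMS_partition v i A /\
    forall j : 'I_m, (nat_of_ord j < minn n.-1 k)%N ->
      exists l : 'I_n, A l = [set j].
Proof.
move=> _ choresv orderedv [A [mmsA numA]] _.
have le_minA : (minn n.-1 k <= num_singletons A)%N by rewrite numA geq_minr.
have [B mmsB initB] :=
  MMS_partition_initial_singletons choresv orderedv mmsA le_minA.
by exists B.
Qed.
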